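(* Let $(X,d)$ be a complete b-metric space with coefficient $s \geq 1$, and let $T: X \to X$ be a continuous PA-contraction with contraction constant $\alpha \in (0,1)$ such that $s\alpha < 1$. Then $T$ has a unique fixed point in $X$, and for every $x \in X$ the sequence $\{T^n x\}_{n\ge 0}$ converges to this fixed point.
   Context: A b-metric space with coefficient $s \ge 1$ is a nonempty set $X$ with a function $d: X\times X \to [0,\infty)$ such that: $d(x,y)=0$ iff $x=y$; $d(x,y)=d(y,x)$ for all $x,y$; and $d(x,z) \le s\,(d(x,y)+d(y,z))$ for all $x,y,z \in X$. A sequence $\{x_n\}$ is Cauchy if $\lim_{m,n\to\infty} d(x_n,x_m)=0$, it converges to $x$ if $d(x_n,x)\to 0$, and the space is complete if every Cauchy sequence converges in $X$; continuity of $T$ means $x_n \to x$ implies $Tx_n \to Tx$. A mapping $T: X\to X$ is a PA-contraction (path-averaged contraction) with contraction constant $\alpha$ if $\alpha \in (0,1)$ and there exists $N \in \mathbb{N}$ such that for all $x,y \in X$ and all $n \ge N$, $$\sum_{k=0}^{n-1} d(T^{k+1}x, T^{k+1}y) \le \alpha \sum_{k=0}^{n-1} d(T^k x, T^k y),$$ where $T^0$ is the identity. *)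

From Stdlib Require Import Reals Lra.
Open Scope R_scope.

Definition is_b_metric {X : Type} (d : X -> X -> R) (s : R) : Prop :=
  1 <= s /\
  (forall x y, 0 <= d x y) /\
  (forall x y, d x y = 0 <-> x = y) /\
  (forall x y, d x y = d y x) /\
  (forall x y z, d x z <= s * (d x y + d y z)).

Definition b_converges {X : Type} (d : X -> X -> R) (u : nat -> X) (x : X) : Prop :=
  forall eps, eps > 0 -> exists N, forall n, (n >= N)%nat -> d (u n) x < eps.

Definition b_cauchy {X : Type} (d : X -> X -> R) (u : nat -> X) : Prop :=
  forall eps, eps > 0 -> exists N, forall m n, (m >= N)%nat -> (n >= N)%nat ->
    d (u n) (u m) < eps.

Definition b_complete {X : Type} (d : X -> X -> R) : Prop :=
  forall u : nat -> X, b_cauchy d u -> exists x, b_converges d u x.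

Definition b_continuous {X : Type} (d : X -> X -> R) (T : X -> X) : Prop :=
  forall (u : nat -> X) (x : X), b_converges d u x ->
    b_converges d (fun n => T (u n)) (T x).

Fixpoint iter_map {X : Type} (T : X -> X) (k : nat) (x : X) : X :=
  match k with
  | O => x
  | S k' => T (iter_map T k' x)
  end.

Fixpoint sum_lt (f : nat -> R) (n : nat) : R :=
  match n with
  | O => 0
  | S n' => sum_lt f n' + f n'
  end.

Definition PA_contraction {X : Type} (d : X -> X -> R) (T : X -> X) (alpha : R) : Prop :=
  0 < alpha < 1 /\
  exists N : nat, forall x y : X, forall n : nat, (n >= N)%nat ->
    sum_lt (fun k => d (iter_map T (S k) x) (iter_map T (S k) y)) n
    <= alpha * sum_lt (fun k => d (iter_map T k x) (iter_map T k y)) n.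

(* Applying the PA-contraction inequality to the pair (T^m x, T^m y) for every m shows that the
   partial sums of d(T^k x, T^k y) over k >= m are bounded by alpha^m B, uniformly in their
   length; hence the orbits of any two points approach each other geometrically.  With y = T x
   the steps of an orbit decay like alpha^n, and since s alpha < 1 the relaxed triangle
   inequality can be iterated to bound d(T^n x, T^(n+p) x) by a geometric sum, so the orbit is
   Cauchy.  Its limit is fixed by continuity, and two fixed points stay at constant distance
   along their orbits, so they coincide. *)

From Stdlib Require Import Reals Lra Lia.
Open Scope R_scope.

Lemma iter_map_add {X : Type} (T : X -> X) m n x :
  iter_map T (m + n) x = iter_map T n (iter_map T m x).
Proof.
  induction n as [|n IH]; simpl.
  - now rewrite Nat.add_0_r.
  - now rewrite Nat.add_succ_r; simpl; rewrite IH.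
Qed.

Lemma iter_map_fixed {X : Type} (T : X -> X) p n : T p = p -> iter_map T n p = p.
Proof. intros Hp; induction n as [|n IH]; simpl; congruence. Qed.

Lemma sum_lt_ext f g n : (forall k, f k = g k) -> sum_lt f n = sum_lt g n.
Proof. intros Hfg; induction n as [|n IH]; simpl; congruence. Qed.

Lemma sum_lt_shift f n : sum_lt f (S n) = f O + sum_lt (fun k => f (S k)) n.
Proof. induction n as [|n IH]; simpl in *; lra. Qed.

Lemma sum_lt_ge0 f n : (forall k, 0 <= f k) -> 0 <= sum_lt f n.
Proof. intros Hf; induction n as [|n IH]; simpl; [lra | specialize (Hf n); lra]. Qed.

Lemma geometric_eventually_lt alpha C e :
  0 <= alpha < 1 -> 0 <= C -> 0 < e ->
  exists M, forall n, (n >= M)%nat -> alpha ^ n * C < e.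
Proof.
  intros Halpha HC He.
  destruct (pow_lt_1_zero alpha ltac:(rewrite Rabs_pos_eq; lra) (e / (C + 1)))
    as [M HM]; [apply Rdiv_lt_0_compat; lra |].
  exists M; intros n Hn.
  specialize (HM n Hn); rewrite Rabs_pos_eq in HM by (apply pow_le; lra).
  apply (Rmult_lt_compat_r (C + 1)) in HM; [| lra].
  replace (e / (C + 1) * (C + 1)) with e in HM by (field; lra).
  assert (0 <= alpha ^ n) by (apply pow_le; lra).
  nra.
Qed.

Lemma le_geometric_nonpos alpha B c :
  0 <= alpha < 1 -> (forall m, c <= alpha ^ m * B) -> c <= 0.
Proof.
  intros Halpha Hc.
  destruct (Rle_or_lt c 0) as [Hle | Hpos]; [exact Hle |].
  assert (HB : c <= B) by (specialize (Hc O); simpl in Hc; lra).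
  destruct (geometric_eventually_lt alpha B c Halpha ltac:(lra) Hpos) as [M HM].
  specialize (HM M (le_n M)); specialize (Hc M); lra.
Qed.

Section SumContracting.

Variables (alpha : R) (N : nat).
Hypothesis alpha_range : 0 <= alpha < 1.

Definition sum_contracting (b : nat -> R) : Prop :=
  forall n, (n >= N)%nat -> sum_lt (fun k => b (S k)) n <= alpha * sum_lt b n.

(* From n >= N on, the partial sums obey S(n+1) <= b 0 + alpha S(n). *)
Lemma sum_lt_bounded_of_contracting b :
  sum_contracting b -> exists B, forall n, (n >= N)%nat -> sum_lt b n <= B.
Proof.
  intros Hb; set (B := Rmax (sum_lt b N) (b O / (1 - alpha))); exists B.
  intros n Hn; induction Hn as [| n Hn IH].
  - apply Rmax_l.
  - rewrite sum_lt_shift.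
    assert (Hb0 : b O / (1 - alpha) <= B) by apply Rmax_r.
    assert (Hb0' : b O = (1 - alpha) * (b O / (1 - alpha))) by (field; lra).
    specialize (Hb n Hn).
    assert (alpha * sum_lt b n <= alpha * B) by (apply Rmult_le_compat_l; lra).
    assert ((1 - alpha) * (b O / (1 - alpha)) <= (1 - alpha) * B)
      by (apply Rmult_le_compat_l; lra).
    lra.
Qed.

Variable a : nat -> R.
Hypothesis a_ge0 : forall k, 0 <= a k.
Hypothesis a_shifts_contracting : forall m, sum_contracting (fun k => a (m + k)%nat).

Lemma tail_sums_geometric :
  exists B, forall m n, (n >= N)%nat -> sum_lt (fun k => a (m + k)%nat) n <= alpha ^ m * B.
Proof.
  destruct (sum_lt_bounded_of_contracting _ (a_shifts_contracting O)) as [B HB].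
  exists B; intros m n Hn; induction m as [| m IH].
  - rewrite pow_O, Rmult_1_l; exact (HB n Hn).
  - rewrite (sum_lt_ext _ (fun k => a (m + S k)%nat)) by (intros k; f_equal; lia).
    eapply Rle_trans; [exact (a_shifts_contracting m n Hn) |].
    simpl; rewrite Rmult_assoc; apply Rmult_le_compat_l; lra.
Qed.

Lemma geometric_decay_of_sum_contracting : exists B, forall m, a m <= alpha ^ m * B.
Proof.
  destruct tail_sums_geometric as [B HB]; exists B; intros m.
  specialize (HB m (S N) (le_S _ _ (le_n N))).
  rewrite sum_lt_shift, Nat.add_0_r in HB.
  assert (0 <= sum_lt (fun k => a (m + S k)%nat) N) by (apply sum_lt_ge0; intros; apply a_ge0).
  lra.
Qed.

End SumContracting.

Section BMetric.

Variables (X : Type) (d : X -> X -> R) (s : R).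
Hypothesis d_bmetric : is_b_metric d s.

Lemma b_dist_ge0 x y : 0 <= d x y.
Proof. apply d_bmetric. Qed.

Lemma b_dist_eq0 x y : d x y = 0 -> x = y.
Proof. apply d_bmetric. Qed.

Lemma b_dist_refl x : d x x = 0.
Proof. now apply d_bmetric. Qed.

Lemma b_dist_sym x y : d x y = d y x.
Proof. apply d_bmetric. Qed.

Lemma b_dist_triangle x y z : d x z <= s * (d x y + d y z).
Proof. apply d_bmetric. Qed.

Lemma b_coef_ge1 : 1 <= s.
Proof. apply d_bmetric. Qed.

Lemma b_converges_shift (u : nat -> X) p :
  b_converges d u p -> b_converges d (fun n => u (S n)) p.
Proof.
  intros Hu e He; destruct (Hu e He) as [M HM].
  exists M; intros n Hn; apply HM; lia.
Qed.

Lemma b_limit_unique (u : nat -> X) p q :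
  b_converges d u p -> b_converges d u q -> p = q.
Proof.
  intros Hp Hq; apply b_dist_eq0.
  destruct (Rle_lt_or_eq_dec 0 (d p q) (b_dist_ge0 p q)) as [Hpos | Hzero]; [exfalso | easy].
  pose proof b_coef_ge1 as Hs.
  set (e := d p q / (2 * s)).
  assert (He : e > 0) by (apply Rdiv_lt_0_compat; lra).
  destruct (Hp e He) as [Mp HMp]; destruct (Hq e He) as [Mq HMq].
  specialize (HMp (Mp + Mq)%nat ltac:(lia)); specialize (HMq (Mp + Mq)%nat ltac:(lia)).
  pose proof (b_dist_triangle p (u (Mp + Mq)%nat) q) as Htri.
  rewrite (b_dist_sym p (u _)) in Htri.
  assert (s * (d (u (Mp + Mq)%nat) p + d (u (Mp + Mq)%nat) q) < s * (2 * e))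
    by (apply Rmult_lt_compat_l; lra).
  assert (s * (2 * e) = d p q) by (unfold e; field; lra).
  lra.
Qed.

Lemma b_continuous_orbit_limit_fixed (T : X -> X) x p :
  b_continuous d T -> b_converges d (fun n => iter_map T n x) p -> T p = p.
Proof.
  intros HT Hp.
  apply (b_limit_unique (fun n => iter_map T (S n) x)).
  - exact (HT _ _ Hp).
  - exact (b_converges_shift _ _ Hp).
Qed.

Section GeometricSteps.

Variables (u : nat -> X) (alpha B : R).
Hypothesis alpha_ge0 : 0 <= alpha.
Hypothesis s_alpha_lt1 : s * alpha < 1.
Hypothesis steps_geometric : forall n, d (u n) (u (S n)) <= alpha ^ n * B.

Lemma geometric_tail_constant_ge0 : 0 <= s * B / (1 - s * alpha).
Proof.
  pose proof b_coef_ge1.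
  assert (0 <= B)
    by (pose proof (b_dist_ge0 (u O) (u 1%nat)); specialize (steps_geometric O); simpl in *; lra).
  unfold Rdiv; apply Rmult_le_pos; [nra | apply Rlt_le, Rinv_0_lt_compat; lra].
Qed.

(* K := s B / (1 - s alpha) is the fixed point of K = s B + s alpha K, which is what one step of
   the relaxed triangle inequality demands. *)
Lemma b_dist_geometric_tail p n :
  d (u n) (u (n + p)%nat) <= alpha ^ n * (s * B / (1 - s * alpha)).
Proof.
  pose proof b_coef_ge1; pose proof geometric_tail_constant_ge0 as HK0.
  set (K := s * B / (1 - s * alpha)) in *.
  assert (HK : K = s * B + s * alpha * K) by (unfold K; field; lra).
  revert n; induction p as [| p IH]; intros n.
  - rewrite Nat.add_0_r, b_dist_refl.
    apply Rmult_le_pos; [apply pow_le |]; lra.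
  - replace (n + S p)%nat with (S n + p)%nat by lia.
    eapply Rle_trans; [apply (b_dist_triangle _ (u (S n))) |].
    specialize (IH (S n)); specialize (steps_geometric n).
    change (alpha ^ S n) with (alpha * alpha ^ n) in IH.
    assert (0 <= alpha ^ n) by (apply pow_le; lra).
    assert (s * (d (u n) (u (S n)) + d (u (S n)) (u (S n + p)%nat))
            <= s * (alpha ^ n * B + alpha * alpha ^ n * K)) by (apply Rmult_le_compat_l; lra).
    assert (alpha ^ n * K = alpha ^ n * (s * B + s * alpha * K)) by (rewrite <- HK; reflexivity).
    lra.
Qed.

Lemma b_cauchy_of_geometric_steps : b_cauchy d u.
Proof.
  pose proof b_coef_ge1.
  intros e He.
  destruct (geometric_eventually_lt alpha _ e ltac:(nra) geometric_tail_constant_ge0 He)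
    as [M HM].
  assert (Hle : forall m n, (M <= m <= n)%nat -> d (u m) (u n) < e).
  { intros m n Hmn; replace n with (m + (n - m))%nat by lia.
    eapply Rle_lt_trans; [apply b_dist_geometric_tail | apply HM; lia]. }
  exists M; intros m n Hm Hn.
  destruct (Nat.le_ge_cases n m).
  - apply Hle; lia.
  - rewrite b_dist_sym; apply Hle; lia.
Qed.

End GeometricSteps.

Section PAContraction.

Variables (T : X -> X) (alpha : R).
Hypothesis T_PA : PA_contraction d T alpha.

Lemma PA_orbit_distance_decay x y :
  exists B, forall m, d (iter_map T m x) (iter_map T m y) <= alpha ^ m * B.
Proof.
  destruct T_PA as [Halpha [N HN]].
  apply (geometric_decay_of_sum_contracting alpha N); [lra | intros; apply b_dist_ge0 |].
  intros m n Hn.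
  assert (Hshift : forall k, d (iter_map T (m + k) x) (iter_map T (m + k) y)
                          = d (iter_map T k (iter_map T m x)) (iter_map T k (iter_map T m y)))
    by (intros k; now rewrite !iter_map_add).
  rewrite (sum_lt_ext _ _ n Hshift), (sum_lt_ext _ _ n (fun k => Hshift (S k))).
  exact (HN (iter_map T m x) (iter_map T m y) n Hn).
Qed.

Lemma PA_fixed_point_unique p q : T p = p -> T q = q -> q = p.
Proof.
  intros Hp Hq; apply b_dist_eq0.
  destruct (PA_orbit_distance_decay q p) as [B HB].
  apply Rle_antisym; [| apply b_dist_ge0].
  apply (le_geometric_nonpos alpha B); [pose proof (proj1 T_PA); lra |].
  intros m; specialize (HB m); now rewrite !iter_map_fixed in HB.
Qed.

Hypothesis s_alpha_lt1 : s * alpha < 1.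

Lemma PA_orbit_cauchy x : b_cauchy d (fun n => iter_map T n x).
Proof.
  destruct (PA_orbit_distance_decay x (T x)) as [B HB].
  pose proof (proj1 T_PA).
  apply (b_cauchy_of_geometric_steps _ alpha B); [lra | exact s_alpha_lt1 |].
  intros n; specialize (HB n); change (T x) with (iter_map T 1 x) in HB.
  rewrite <- iter_map_add in HB; exact HB.
Qed.

End PAContraction.

End BMetric.

Theorem theorem1 (X : Type) (d : X -> X -> R) (s alpha : R) (T : X -> X) (x0 : X) :
  is_b_metric d s ->
  b_complete d ->
  b_continuous d T ->
  PA_contraction d T alpha ->
  s * alpha < 1 ->
  exists p : X,
    T p = p /\
    (forall q : X, T q = q -> q = p) /\
    (forall x : X, b_converges d (fun n => iter_map T n x) p).
Proof.
  intros Hd Hcomplete Hcont HT Hsalpha.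
  assert (Horbit : forall x, exists p, T p = p /\ b_converges d (fun n => iter_map T n x) p).
  { intros x.
    destruct (Hcomplete _ (PA_orbit_cauchy X d s Hd T alpha HT Hsalpha x)) as [p Hp].
    exists p; split; [exact (b_continuous_orbit_limit_fixed X d s Hd T x p Hcont Hp) | exact Hp]. }
  destruct (Horbit x0) as [p [Hp _]].
  exists p; split; [exact Hp | split].
  - intros q Hq; exact (PA_fixed_point_unique X d s Hd T alpha HT p q Hp Hq).
  - intros x; destruct (Horbit x) as [q [Hq Hconv]].
    now rewrite (PA_fixed_point_unique X d s Hd T alpha HT p q Hp Hq) in Hconv.
Qed.
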